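(* Every element of $PSL(2,\mathbb H(\mathbb Z))$, i.e. every transformation $q\mapsto(aq+b)(cq+d)^{-1}$ induced by an invertible matrix $\begin{pmatrix}a&b\\c&d\end{pmatrix}$ with entries in the Lipschitz integers $\mathbb H(\mathbb Z)$, which satisfies the (BG) conditions belongs to the Lipschitz quaternionic modular group $PSL(2,\mathfrak L)$.
   Context: $\mathbb H(\mathbb Z)=\{a+b\mathbf i+c\mathbf j+d\mathbf k:a,b,c,d\in\mathbb Z\}$ (Lipschitz integers). A quaternionic matrix $A$ satisfies the (BG) conditions if $\bar A^tKA=K$, $K=\begin{pmatrix}0&1\\1&0\end{pmatrix}$, equivalently $\Re(a\bar c)=0$, $\Re(b\bar d)=0$, $\bar bc+\bar da=1$; these are exactly the matrices inducing orientation-preserving isometries of $\mathbf H^1_{\mathbb H}=\{q:\Re q>0\}$. $PSL(2,\mathfrak L)$ is the group generated by $T(q)=q^{-1}$ and the translations $q\mapsto q+\omega$, $\omega\in\{b\mathbf i+c\mathbf j+d\mathbf k:b,c,d\in\mathbb Z\}$. *)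

From HB Require Import structures.
From mathcomp Require Import all_boot all_order all_algebra.
Set Implicit Arguments. Unset Strict Implicit. Unset Printing Implicit Defensive.
Import Order.TTheory GRing.Theory Num.Theory.
Local Open Scope ring_scope.

(* q = q0 + q1 i + q2 j + q3 k *)
Record quat (R : Type) := Quat { q0 : R; q1 : R; q2 : R; q3 : R }.

Section QuatOps.
Variable R : ringType.
Definition qadd (x y : quat R) : quat R :=
  Quat (q0 x + q0 y) (q1 x + q1 y) (q2 x + q2 y) (q3 x + q3 y).
(* Hamilton product, i^2 = j^2 = k^2 = ijk = -1 *)
Definition qmul (x y : quat R) : quat R :=
  Quat (q0 x * q0 y - q1 x * q1 y - q2 x * q2 y - q3 x * q3 y)
       (q0 x * q1 y + q1 x * q0 y + q2 x * q3 y - q3 x * q2 y)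
       (q0 x * q2 y - q1 x * q3 y + q2 x * q0 y + q3 x * q1 y)
       (q0 x * q3 y + q1 x * q2 y - q2 x * q1 y + q3 x * q0 y).
Definition qconj (x : quat R) : quat R := Quat (q0 x) (- q1 x) (- q2 x) (- q3 x).
Definition qone : quat R := Quat 1 0 0 0.
Definition qnorm2 (x : quat R) : R := q0 x ^+ 2 + q1 x ^+ 2 + q2 x ^+ 2 + q3 x ^+ 2.
Definition qre (x : quat R) : R := q0 x.
End QuatOps.

Definition qinv (F : fieldType) (x : quat F) : quat F :=
  let n := (qnorm2 x)^-1 in
  Quat (q0 x * n) (- q1 x * n) (- q2 x * n) (- q3 x * n).

(* embedding of Lipschitz integers H(Z) = quat int into quaternions over R *)
Definition qofint (R : ringType) (x : quat int) : quat R :=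
  Quat (q0 x)%:~R (q1 x)%:~R (q2 x)%:~R (q3 x)%:~R.

Definition BG (a b c d : quat int) : Prop :=
  [/\ qre (qmul a (qconj c)) = 0,
      qre (qmul b (qconj d)) = 0 &
      qadd (qmul (qconj b) c) (qmul (qconj d) a) = qone int].

Definition mobius (R : fieldType) (a b c d : quat int) (q : quat R) : quat R :=
  qmul (qadd (qmul (qofint R a) q) (qofint R b))
       (qinv (qadd (qmul (qofint R c) q) (qofint R d))).

(* generators of PSL(2, L): T(q) = q^{-1} and translations q |-> q + (b i + c j + d k) *)
Inductive gen := GenT | GenTr (b c d : int).

Definition gen_act (R : fieldType) (g : gen) (q : quat R) : quat R :=
  match g with
  | GenT => qinv q
  | GenTr b c d => qadd q (Quat 0 b%:~R c%:~R d%:~R)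
  end.

(* composition of a word of generators (the generating set is closed under
   inverses: T^{-1} = T and the inverse of a translation is a translation) *)
Definition word_act (R : fieldType) (w : seq gen) (q : quat R) : quat R :=
  foldr (@gen_act R) q w.

Definition in_PSL2L (R : realFieldType) (f : quat R -> quat R) : Prop :=
  exists w : seq gen, forall q : quat R, 0 < qre q -> f q = word_act w q.

(* Euclid's algorithm for Lipschitz quaternions.  Composing the map of
   [(a, b; c, d)] with the inversion [T] and a translation by a pure Lipschitz
   quaternion [W] gives the map of [(c, d; a + W c, b + W d)], which again
   satisfies (BG).  As (BG) forces [Re (a conj c) = 0], the quaternion
   [a conj c / |c|^2] is purely imaginary, and rounding its three imaginary
   coordinates yields [W] with [|a + W c|^2 <= 3/4 |c|^2].  Iterating, we reach
   [c = 0]; then [conj d * a = 1], so [a] is one of the units [+-1, +-i, +-j, +-k].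
   For [a = +-1] the map is a translation, and a purely imaginary unit is
   turned into [-1] by three more steps. *)

From mathcomp Require Import all_boot all_order all_algebra.
From mathcomp Require Import ring zify.
Import Order.TTheory GRing.Theory Num.Theory.
Local Open Scope ring_scope.

Lemma quat_eq (R : Type) (x y : quat R) :
  q0 x = q0 y -> q1 x = q1 y -> q2 x = q2 y -> q3 x = q3 y -> x = y.
Proof. by case: x y => ???? [????] /= -> -> -> ->. Qed.

Ltac quat_ring := apply: quat_eq => /=; ring.

Section QuatAlgebra.
Context {R : comNzRingType}.
Implicit Types x y z : quat R.

Lemma qmulA x y z : qmul x (qmul y z) = qmul (qmul x y) z.
Proof. by case: x y z => ???? [????] [????]; quat_ring. Qed.

Lemma qmul1l x : qmul (qone R) x = x.
Proof. by case: x => ????; quat_ring. Qed.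

Lemma qmul1r x : qmul x (qone R) = x.
Proof. by case: x => ????; quat_ring. Qed.

Lemma qmulDl x y z : qmul (qadd x y) z = qadd (qmul x z) (qmul y z).
Proof. by case: x y z => ???? [????] [????]; quat_ring. Qed.

Lemma qadd0l x : qadd (Quat 0 0 0 0) x = x.
Proof. by case: x => ????; quat_ring. Qed.

Lemma qadd0r x : qadd x (Quat 0 0 0 0) = x.
Proof. by case: x => ????; quat_ring. Qed.

Lemma qnorm2M x y : qnorm2 (qmul x y) = qnorm2 x * qnorm2 y.
Proof. by case: x y => ???? [????]; rewrite /qnorm2 /=; ring. Qed.

Lemma qnorm2_1 : qnorm2 (qone R) = 1.
Proof. by rewrite /qnorm2 /=; ring. Qed.

Lemma qnorm2_conj x : qnorm2 (qconj x) = qnorm2 x.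
Proof. by case: x => ????; rewrite /qnorm2 /=; ring. Qed.

End QuatAlgebra.

Section QuatNorm.
Context {R : realDomainType}.
Implicit Types x y : quat R.

Lemma qnorm2_ge0 x : 0 <= qnorm2 x.
Proof. by rewrite /qnorm2 !addr_ge0 ?sqr_ge0. Qed.

Lemma qnorm2_eq0 x : qnorm2 x = 0 -> x = Quat 0 0 0 0.
Proof.
case: x => x0 x1 x2 x3 /eqP; rewrite /qnorm2 /=.
rewrite !paddr_eq0 ?addr_ge0 ?sqr_ge0 // !sqrf_eq0.
by case/andP => /andP[/andP[/eqP-> /eqP->] /eqP->] /eqP->.
Qed.

Lemma qnorm2_neq0_qre x y : 0 < qre (qmul (qconj y) x) -> qnorm2 y != 0.
Proof. by apply: contraTneq => /qnorm2_eq0 ->; rewrite /qre /= oppr0 !mul0r !subr0 ltxx. Qed.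

End QuatNorm.

Section QuatInverse.
Context {F : fieldType}.
Implicit Types x y : quat F.

Lemma qmulV x : qnorm2 x != 0 -> qmul x (qinv x) = qone F.
Proof.
case: x => x0 x1 x2 x3; rewrite /qinv /qnorm2 /= => nx.
by apply: quat_eq => /=; [rewrite -[RHS](mulfV nx) |..]; ring.
Qed.

Lemma qmulVl x : qnorm2 x != 0 -> qmul (qinv x) x = qone F.
Proof.
case: x => x0 x1 x2 x3; rewrite /qinv /qnorm2 /= => nx.
by apply: quat_eq => /=; [rewrite -[RHS](mulfV nx) |..]; ring.
Qed.

Lemma qinv_eq x y : qmul x y = qone F -> qinv x = y.
Proof.
move=> xy1; have nx : qnorm2 x != 0.
  by apply: contra_eq_neq (qnorm2M x y) => ->; rewrite xy1 qnorm2_1 mul0r oner_neq0.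
by rewrite -[qinv x]qmul1r -xy1 qmulA qmulVl // qmul1l.
Qed.

Lemma qinv_mulV x y : qnorm2 x != 0 -> qnorm2 y != 0 ->
  qinv (qmul x (qinv y)) = qmul y (qinv x).
Proof.
by move=> nx ny; apply: qinv_eq; rewrite -qmulA (qmulA (qinv y)) qmulVl // qmul1l qmulV.
Qed.

End QuatInverse.

Section QuatOfInt.
Context {R : comNzRingType}.
Implicit Types x y : quat int.

Lemma qofintD x y : qofint R (qadd x y) = qadd (qofint R x) (qofint R y).
Proof. by apply: quat_eq => /=; ring. Qed.

Lemma qofintM x y : qofint R (qmul x y) = qmul (qofint R x) (qofint R y).
Proof. by apply: quat_eq => /=; ring. Qed.

Lemma qofint_conj x : qofint R (qconj x) = qconj (qofint R x).
Proof. by apply: quat_eq => /=; ring. Qed.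

Lemma qofint1 : qofint R (qone int) = qone R.
Proof. by apply: quat_eq. Qed.

Lemma qre_qofint x : qre (qofint R x) = (qre x)%:~R.
Proof. by []. Qed.

End QuatOfInt.

Lemma qinv_qofint {F : fieldType} {x y : quat int} :
  qmul x y = qone int -> qinv (qofint F x) = qofint F y.
Proof. by move=> xy1; apply: qinv_eq; rewrite -qofintM xy1 qofint1. Qed.

Definition bg_cond {R : nzRingType} (a b c d : quat R) : Prop :=
  [/\ qre (qmul a (qconj c)) = 0, qre (qmul b (qconj d)) = 0 &
      qadd (qmul (qconj b) c) (qmul (qconj d) a) = qone R].

Lemma bg_cond_qofint (R : comNzRingType) {a b c d : quat int} : BG a b c d ->
  bg_cond (qofint R a) (qofint R b) (qofint R c) (qofint R d).
Proof.
case=> ac bd bcda; split; rewrite -?qofint_conj -?qofintM ?qre_qofint ?ac ?bd //.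
by rewrite -qofintD bcda qofint1.
Qed.

Lemma qre_conj_affine {R : comNzRingType} (A B C D q : quat R) :
  qre (qmul (qconj (qadd (qmul C q) D)) (qadd (qmul A q) B)) =
  qnorm2 q * qre (qmul A (qconj C)) + qre (qmul B (qconj D)) +
  qre (qmul (qadd (qmul (qconj B) C) (qmul (qconj D) A)) q).
Proof. by case: A B C D q => ???? [????] [????] [????] [????]; rewrite /qnorm2 /=; ring. Qed.

Lemma bg_qre_conj_affine {R : comNzRingType} {A B C D : quat R} (q : quat R) :
  bg_cond A B C D -> qre (qmul (qconj (qadd (qmul C q) D)) (qadd (qmul A q) B)) = qre q.
Proof. by case=> ac bd bcda; rewrite qre_conj_affine ac bd bcda mulr0 !add0r qmul1l. Qed.

Lemma bg_den_neq0 {R : realDomainType} {A B C D q : quat R} :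
  bg_cond A B C D -> 0 < qre q -> qnorm2 (qadd (qmul C q) D) != 0.
Proof.
move=> bg q_gt0; apply: (@qnorm2_neq0_qre _ (qadd (qmul A q) B)).
by rewrite bg_qre_conj_affine.
Qed.

Lemma bg_cond_step {R : comNzRingType} {A B C D W : quat R} : qre W = 0 ->
  bg_cond A B C D -> bg_cond C D (qadd A (qmul W C)) (qadd B (qmul W D)).
Proof.
case: A B C D W => ???? [????] [????] [????] [w0 ???]; rewrite /qre /= => -> [].
rewrite /qre /= => ac bd [= e0 e1 e2 e3].
split; rewrite /qre /=; [rewrite -[RHS]ac | rewrite -[RHS]bd |]; try ring.
by apply: quat_eq => /=;
  [rewrite -[RHS]e0 | rewrite -[RHS]e1 | rewrite -[RHS]e2 | rewrite -[RHS]e3]; ring.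
Qed.

Lemma qaffine_step {R : comNzRingType} (A B C D W q : quat R) :
  qadd (qmul (qadd A (qmul W C)) q) (qadd B (qmul W D)) =
  qadd (qadd (qmul A q) B) (qmul W (qadd (qmul C q) D)).
Proof. by case: A B C D W q => ???? [????] [????] [????] [????] [????]; quat_ring. Qed.

Lemma mobius_step {R : realFieldType} {a b c d W : quat int} {q : quat R} :
  qre W = 0 -> BG a b c d -> 0 < qre q ->
  mobius a b c d q = gen_act (GenTr (- q1 W) (- q2 W) (- q3 W))
    (gen_act GenT (mobius c d (qadd a (qmul W c)) (qadd b (qmul W d)) q)).
Proof.
move=> W0 bg q_gt0; have bgR := bg_cond_qofint R bg.
have W0R : qre (qofint R W) = 0 by rewrite qre_qofint W0.
have nY := bg_den_neq0 bgR q_gt0.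
have := bg_den_neq0 (bg_cond_step W0R bgR) q_gt0; rewrite qaffine_step => nZ.
rewrite /mobius /= !qofintD !qofintM qaffine_step.
set X := qadd (qmul _ q) (qofint R b) in nZ *; set Y := qadd (qmul _ q) _ in nY nZ *.
rewrite qinv_mulV // [qmul (qadd X _) _]qmulDl -qmulA qmulV // qmul1r.
by move: (qmul X _) W0 => P; case: W {W0R nZ} => w0 ??? /= ->; quat_ring.
Qed.

Lemma in_PSL2L_step {R : realFieldType} {a b c d W : quat int} :
  qre W = 0 -> BG a b c d ->
  in_PSL2L (mobius (R:=R) c d (qadd a (qmul W c)) (qadd b (qmul W d))) ->
  in_PSL2L (mobius (R:=R) a b c d).
Proof.
move=> W0 bg [w wE]; exists [:: GenTr (- q1 W) (- q2 W) (- q3 W), GenT & w] => q q_gt0.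
by rewrite (mobius_step W0 bg q_gt0) wE.
Qed.

Lemma exists_centered_rem (u : int) {N : int} :
  0 < N -> exists w, - N <= 2 * (u + N * w) <= N.
Proof.
move=> N_gt0; have := divz_eq u N; have := modz_ge0 u (lt0r_neq0 N_gt0).
have := ltz_pmod u N_gt0; set k := (u %/ N)%Z; set r := (u %% N)%Z => r_lt r_ge0 uE.
by have [|] := lerP (2 * r) N; [exists (- k) | exists (- k - 1)]; lia.
Qed.

Lemma sqr_sum3_lt {s N x1 x2 x3 : int} :
  0 < N -> s * N = x1 ^+ 2 + x2 ^+ 2 + x3 ^+ 2 ->
  - N <= 2 * x1 <= N -> - N <= 2 * x2 <= N -> - N <= 2 * x3 <= N -> s < N.
Proof.
move=> N_gt0 sE.
have sqr_le (x : int) : - N <= 2 * x <= N -> 4 * x ^+ 2 <= N ^+ 2.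
  by case/andP=> ? ?; rewrite !expr2; nia.
move=> /sqr_le h1 /sqr_le h2 /sqr_le h3; move: sE h1 h2 h3; rewrite !expr2; nia.
Qed.

Lemma qnorm2_step {R : comNzRingType} (a c : quat R) (w1 w2 w3 : R) :
  let u := qmul a (qconj c) in let N := qnorm2 c in
  qnorm2 (qadd a (qmul (Quat 0 w1 w2 w3) c)) * N =
  qre u ^+ 2 + (q1 u + N * w1) ^+ 2 + (q2 u + N * w2) ^+ 2 + (q3 u + N * w3) ^+ 2.
Proof. by case: a c => ???? [????]; rewrite /qnorm2 /=; ring. Qed.

(* The three-dimensional rounding gives [|a + W c|^2 <= 3/4 |c|^2]. *)
Lemma exists_step_qnorm2_lt {a c : quat int} :
  qre (qmul a (qconj c)) = 0 -> 0 < qnorm2 c ->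
  exists W, qre W = 0 /\ qnorm2 (qadd a (qmul W c)) < qnorm2 c.
Proof.
move=> ac c_gt0; set u := qmul a (qconj c).
have [w1 w1P] := exists_centered_rem (q1 u) c_gt0.
have [w2 w2P] := exists_centered_rem (q2 u) c_gt0.
have [w3 w3P] := exists_centered_rem (q3 u) c_gt0.
exists (Quat 0 w1 w2 w3); split=> //.
by apply: (sqr_sum3_lt c_gt0 _ w1P w2P w3P); rewrite qnorm2_step ac expr0n add0r.
Qed.

Lemma qnorm2_eq1_int {a : quat int} : qnorm2 a = 1 ->
  qre a = 0 \/ exists2 s, s = 1 \/ s = -1 & a = Quat s 0 0 0.
Proof.
case: a => a0 a1 a2 a3; rewrite /qnorm2 /qre /= !expr2 => a_unit.
have [->|a0_neq0] := eqVneq a0 0; [by left | right].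
have [-> -> ->] : [/\ a1 = 0, a2 = 0 & a3 = 0] by split; nia.
by exists a0; first nia.
Qed.

Lemma bg_c0_qnorm2_eq1 {a b d : quat int} : BG a b (Quat 0 0 0 0) d -> qnorm2 a = 1.
Proof.
case=> _ _ bda1.
have da1 : qmul (qconj d) a = qone int.
  by rewrite -{}bda1; case: b d a => ???? [????] [????]; quat_ring.
have := qnorm2M (qconj d) a; rewrite da1 qnorm2_1 qnorm2_conj.
have := qnorm2_ge0 d; have := qnorm2_ge0 a.
move: (qnorm2 d) (qnorm2 a) => x y y_ge0 x_ge0 xy1.
have : x != 0 by apply: contra_eq_neq xy1 => ->; rewrite mul0r.
nia.
Qed.

Lemma in_PSL2L_translation {R : realFieldType} {a b c d : quat int} (s : int) :
  s = 1 \/ s = -1 -> a = Quat s 0 0 0 -> c = Quat 0 0 0 0 -> BG a b c d ->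
  in_PSL2L (mobius (R:=R) a b c d).
Proof.
move=> s_unit -> -> [_]; case: b d => b0 b1 b2 b3 [d0 d1 d2 d3].
rewrite /qre /= => bd [= e0 e1 e2 e3].
have [-> -> -> ->] : [/\ d0 = s, d1 = 0, d2 = 0 & d3 = 0].
  by case: s_unit => ?; subst s; split; lia.
have -> : b0 = 0 by case: s_unit => ?; subst s; lia.
have ssq : qmul (Quat s 0 0 0) (Quat s 0 0 0) = qone int.
  by case: s_unit => ->; apply: quat_eq.
exists [:: GenTr (s * b1) (s * b2) (s * b3)] => q _.
have den : qadd (qmul (qofint R (Quat 0 0 0 0)) q) (qofint R (Quat s 0 0 0)) =
             qofint R (Quat s 0 0 0) by case: q => ????; quat_ring.
rewrite /mobius /= den (qinv_qofint ssq).
by case: s_unit ssq => -> _; case: q {den} => ????; quat_ring.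
Qed.

Lemma in_PSL2L_pure_unit {R : realFieldType} {a b d : quat int} :
  qre a = 0 -> qnorm2 a = 1 -> BG a b (Quat 0 0 0 0) d ->
  in_PSL2L (mobius (R:=R) a b (Quat 0 0 0 0) d).
Proof.
move=> a_pure a_unit bg.
have aa : qmul a a = Quat (-1) 0 0 0.
  case: a a_pure a_unit {bg} => a0 a1 a2 a3 /= ->; rewrite /qnorm2 /= => a_unit.
  by apply: quat_eq => /=; [lia | ring..].
have O_pure : qre (Quat 0 0 0 0 : quat int) = 0 by [].
(* [(a, b; 0, d)] -> [(0, d; a, b)] -> [(a, b; -1, _)] -> [(-1, _; 0, _)]. *)
have bg1 := bg_cond_step O_pure bg; have bg2 := bg_cond_step a_pure bg1.
apply: (in_PSL2L_step O_pure bg); apply: (in_PSL2L_step a_pure bg1).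
apply: (in_PSL2L_step a_pure bg2).
apply: (in_PSL2L_translation (-1) _ _ _ (bg_cond_step a_pure bg2));
  rewrite ?qadd0l ?qadd0r //; first by right.
by rewrite aa; case: (a) => ????; quat_ring.
Qed.

Lemma in_PSL2L_c0 {R : realFieldType} {a b d : quat int} :
  BG a b (Quat 0 0 0 0) d -> in_PSL2L (mobius (R:=R) a b (Quat 0 0 0 0) d).
Proof.
move=> bg; have a_unit := bg_c0_qnorm2_eq1 bg.
have [a_pure | [s s_unit aE]] := qnorm2_eq1_int a_unit.
  exact: in_PSL2L_pure_unit.
exact: in_PSL2L_translation s s_unit aE erefl bg.
Qed.

Lemma in_PSL2L_qnorm2_lt {R : realFieldType} (n : nat) {a b c d : quat int} :
  BG a b c d -> qnorm2 c < n%:Z -> in_PSL2L (mobius (R:=R) a b c d).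
Proof.
elim: n a b c d => [|n IHn] a b c d bg c_lt; first by rewrite ltNge qnorm2_ge0 in c_lt.
have [/qnorm2_eq0 c0|c_neq0] := eqVneq (qnorm2 c) 0.
  by move: bg; rewrite c0; apply: in_PSL2L_c0.
have c_gt0 : 0 < qnorm2 c by rewrite lt_def c_neq0 qnorm2_ge0.
have [ac _ _] := bg.
have [W [W_pure cW_lt]] := exists_step_qnorm2_lt ac c_gt0.
apply: (in_PSL2L_step W_pure bg); apply: IHn; first exact: bg_cond_step W_pure bg.
lia.
Qed.

Theorem mainTheorem10 (R : realFieldType) (a b c d : quat int) :
  BG a b c d -> @in_PSL2L R (@mobius R a b c d).
Proof.
move=> bg; apply: (in_PSL2L_qnorm2_lt `|qnorm2 c|%N.+1 bg).
by rewrite -addn1 PoszD gez0_abs ?qnorm2_ge0 // ltzD1.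
Qed.
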